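(* Let $N\ge 1$ be an integer and $h,g>0$ real numbers. For $k\in\{0,1,\dots,N\}$ and $\Delta>0$ define $$R_k(\Delta):=\log\Big(1+(N-k)\frac{h^2}{1+\Delta}\Big)+\log(1+kg^2)-k\log\Big(\frac{1+\Delta}{\Delta}\Big)$$ (logarithms base $2$). Then for all $i,j\in\{0,\dots,N\}$ with $i\neq j$ there exists exactly one $\Delta=\Delta^*_{ij}>0$ with $R_i(\Delta)=R_j(\Delta)$.
   Context: $R_k(\Delta)$ is the quantize-map-and-forward rate of a cut containing $k$ relays in the symmetric $N$-relay diamond network (all source-relay magnitudes equal $h$, all relay-destination magnitudes equal $g$) when every relay uses Gaussian quantization distortion $\Delta$. *)

From Stdlib Require Import Reals.
Open Scope R_scope.

Definition log2 (x : R) : R := ln x / ln 2.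

(* QMF rate of a cut containing k relays in the symmetric N-relay diamond
   network with quantization distortion D (intended for k <= N, D > 0). *)
Definition Rk (N : nat) (h g : R) (k : nat) (D : R) : R :=
  log2 (1 + INR (N - k) * (h ^ 2 / (1 + D)))
  + log2 (1 + INR k * g ^ 2)
  - INR k * log2 ((1 + D) / D).

(* For i < j the difference (R_i - R_j) ln 2 has the form
   ln (1 + (N-i) x) - ln (1 + (N-j) x) + c + (j-i) ln ((1+D)/D),  x = h^2/(1+D),
   with c = ln (1 + i g^2) - ln (1 + j g^2) < 0.  Both D-dependent parts decrease
   in D, the second strictly, so the difference is strictly decreasing; it tends
   to +oo as D -> 0 and to c < 0 as D -> oo.  The intermediate value theorem
   gives a root and monotonicity makes it unique. *)

From Stdlib Require Import Reals Lra Lia.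
From Coquelicot Require Import Coquelicot.
Open Scope R_scope.

Lemma ln_le_sub1 (x : R) : 0 < x -> ln x <= x - 1.
Proof.
  intro Hx.
  rewrite <- (ln_exp (x - 1)).
  apply ln_le; [exact Hx|].
  generalize (exp_ineq1_le (x - 1)); lra.
Qed.

Lemma ln_one_plus_inv_decreasing (s t : R) :
  0 < s -> s < t -> ln ((1 + t) / t) < ln ((1 + s) / s).
Proof.
  intros Hs Hst.
  apply ln_increasing; [apply Rdiv_lt_0_compat; lra|].
  replace ((1 + t) / t) with (1 + / t) by (field; lra).
  replace ((1 + s) / s) with (1 + / s) by (field; lra).
  apply Rplus_lt_compat_l, Rinv_lt_contravar; nra.
Qed.

(* After exponentiating, the two cross products differ by (a - b) (y - x) >= 0. *)
Lemma ln_ratio_nondecreasing (a b x y : R) :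
  0 <= b -> b <= a -> 0 <= x -> x <= y ->
  ln (1 + a * x) - ln (1 + b * x) <= ln (1 + a * y) - ln (1 + b * y).
Proof.
  intros Hb Hba Hx Hxy.
  assert (0 < 1 + a * x) by nra. assert (0 < 1 + b * x) by nra.
  assert (0 < 1 + a * y) by nra. assert (0 < 1 + b * y) by nra.
  enough (ln (1 + a * x) + ln (1 + b * y) <= ln (1 + a * y) + ln (1 + b * x)) by lra.
  rewrite <- !ln_mult by assumption.
  apply ln_le; [nra|].
  assert (0 <= (a - b) * (y - x)) by (apply Rmult_le_pos; lra).
  nra.
Qed.

Definition cut_gap (a b H c m D : R) : R :=
  ln (1 + a * (H / (1 + D))) - ln (1 + b * (H / (1 + D))) + c + m * ln ((1 + D) / D).

Section CutGap.

Variables a b H c m : R.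
Hypothesis b_ge0 : 0 <= b.
Hypothesis b_le_a : b <= a.
Hypothesis H_gt0 : 0 < H.
Hypothesis m_gt0 : 0 < m.

Lemma cut_gap_continuous (D : R) : 0 < D -> continuity_pt (cut_gap a b H c m) D.
Proof.
  intro HD.
  apply continuity_pt_filterlim, (@ex_derive_continuous R_AbsRing R_NormedModule).
  unfold cut_gap; auto_derive.
  assert (0 < H / (1 + D)) by (apply Rdiv_lt_0_compat; lra).
  repeat split; try nra; try lra.
  apply Rdiv_lt_0_compat; lra.
Qed.

Lemma cut_gap_decreasing (s t : R) :
  0 < s -> s < t -> cut_gap a b H c m t < cut_gap a b H c m s.
Proof.
  intros Hs Hst. unfold cut_gap.
  assert (Hts : H / (1 + t) <= H / (1 + s)).
  { apply Rmult_le_compat_l; [lra|]. apply Rinv_le_contravar; lra. }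
  assert (Ht : 0 <= H / (1 + t)) by (apply Rlt_le, Rdiv_lt_0_compat; lra).
  pose proof (ln_ratio_nondecreasing a b _ _ b_ge0 b_le_a Ht Hts).
  pose proof (ln_one_plus_inv_decreasing s t Hs Hst).
  nra.
Qed.

(* Near 0 the term m ln ((1+D)/D) > - m ln D dominates; D = exp (c/m) suffices. *)
Lemma cut_gap_pos_near0 : exists d, 0 < d /\ 0 < cut_gap a b H c m d.
Proof.
  set (d := exp (c / m)); exists d.
  assert (Hd : 0 < d) by apply exp_pos.
  assert (0 < H / (1 + d)) by (apply Rdiv_lt_0_compat; lra).
  assert (ln (1 + b * (H / (1 + d))) <= ln (1 + a * (H / (1 + d)))) by (apply ln_le; nra).
  assert (Hinv : ln (/ d) < ln ((1 + d) / d)).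
  { apply ln_increasing; [apply Rinv_0_lt_compat; lra|].
    replace ((1 + d) / d) with (/ d + 1) by (field; lra). lra. }
  assert (Hlnd : m * ln (/ d) = - c).
  { unfold d; rewrite ln_Rinv, ln_exp by apply exp_pos. field; lra. }
  split; [exact Hd|]. unfold cut_gap; fold d. nra.
Qed.

(* Far out the D-dependent part is at most (a H + m) / D, while c < 0 stays. *)
Lemma cut_gap_neg_far : c < 0 -> exists d, 0 < d /\ cut_gap a b H c m d < 0.
Proof.
  intro Hc.
  set (d := 2 * (a * H + m) / - c); exists d.
  assert (Hd : 0 < d) by (apply Rdiv_lt_0_compat; nra).
  assert (0 < H / (1 + d)) by (apply Rdiv_lt_0_compat; lra).
  assert (0 <= ln (1 + b * (H / (1 + d)))) by (rewrite <- ln_1; apply ln_le; nra).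
  assert (ln (1 + a * (H / (1 + d))) <= a * H / d).
  { eapply Rle_trans; [apply ln_le_sub1; nra|].
    replace (1 + a * (H / (1 + d)) - 1) with (a * H / (1 + d)) by (field; lra).
    apply Rmult_le_compat_l; [nra|]. apply Rinv_le_contravar; lra. }
  assert (ln ((1 + d) / d) <= / d).
  { eapply Rle_trans; [apply ln_le_sub1, Rdiv_lt_0_compat; lra|].
    right; field; lra. }
  assert (a * H / d + m * / d = - c / 2) by (unfold d; field; nra).
  split; [exact Hd|]. unfold cut_gap; fold d.
  assert (m * ln ((1 + d) / d) <= m * / d) by (apply Rmult_le_compat_l; lra).
  lra.
Qed.

End CutGap.

Lemma decreasing_unique_root (f : R -> R) :
  (forall t, 0 < t -> continuity_pt f t) ->
  (forall s t, 0 < s -> s < t -> f t < f s) ->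
  (exists x, 0 < x /\ 0 < f x) -> (exists y, 0 < y /\ f y < 0) ->
  exists! z, 0 < z /\ f z = 0.
Proof.
  intros Hcont Hdecr [x [Hx Hfx]] [y [Hy Hfy]].
  assert (Hxy : x < y).
  { destruct (Rtotal_order x y) as [|[->|Hyx]]; [assumption|lra|].
    specialize (Hdecr y x Hy Hyx); lra. }
  destruct (Ranalysis5.IVT_interv (fun t => - f t) x y) as [z [Hz Hfz]].
  - intros t Ht. apply continuity_pt_opp, Hcont; lra.
  - exact Hxy.
  - lra.
  - lra.
  - exists z; split; [split; lra|].
    intros w [Hw Hfw].
    destruct (Rtotal_order z w) as [Hzw|[Hzw|Hwz]]; [|exact Hzw|].
    + specialize (Hdecr z w ltac:(lra) Hzw); lra.
    + specialize (Hdecr w z Hw Hwz); lra.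
Qed.

Lemma Rk_sub (N : nat) (h g : R) (i j : nat) (D : R) :
  Rk N h g i D - Rk N h g j D
  = cut_gap (INR (N - i)) (INR (N - j)) (h ^ 2)
      (ln (1 + INR i * g ^ 2) - ln (1 + INR j * g ^ 2)) (INR j - INR i) D / ln 2.
Proof.
  assert (0 < ln 2) by (generalize ln_lt_2; lra).
  unfold Rk, cut_gap, log2. field. lra.
Qed.

Lemma Rk_eq_unique_lt (N : nat) (h g : R) (i j : nat) :
  0 < h -> 0 < g -> (i < j)%nat -> (j <= N)%nat ->
  exists! D : R, 0 < D /\ Rk N h g i D = Rk N h g j D.
Proof.
  intros Hh Hg Hij HjN.
  set (c := ln (1 + INR i * g ^ 2) - ln (1 + INR j * g ^ 2)).
  assert (Hm : 0 < INR j - INR i) by (pose proof (lt_INR _ _ Hij); lra).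
  assert (Hb : 0 <= INR (N - j)) by apply pos_INR.
  assert (Hba : INR (N - j) <= INR (N - i)) by (apply le_INR; lia).
  assert (HH : 0 < h ^ 2) by (apply pow_lt; lra).
  assert (Hc : c < 0).
  { assert (0 < g ^ 2) by (apply pow_lt; lra). pose proof (pos_INR i).
    enough (ln (1 + INR i * g ^ 2) < ln (1 + INR j * g ^ 2)) by (unfold c; lra).
    apply ln_increasing; nra. }
  assert (Hroot : forall D, Rk N h g i D = Rk N h g j D <->
            cut_gap (INR (N - i)) (INR (N - j)) (h ^ 2) c (INR j - INR i) D = 0).
  { intro D. assert (0 < ln 2) by (generalize ln_lt_2; lra).
    pose proof (Rk_sub N h g i j D) as E. fold c in E.
    split; intro Z.
    - rewrite Z, Rminus_diag in E. unfold Rdiv in E.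
      apply Rmult_eq_reg_r with (/ ln 2); [lra|apply Rinv_neq_0_compat; lra].
    - rewrite Z in E. unfold Rdiv in E. lra. }
  destruct (decreasing_unique_root _
              (cut_gap_continuous _ _ _ c _ Hb Hba HH)
              (cut_gap_decreasing _ _ _ c _ Hb Hba HH Hm)
              (cut_gap_pos_near0 _ _ _ c _ Hb Hba HH Hm)
              (cut_gap_neg_far _ _ _ _ _ Hb Hba HH Hm Hc)) as [z [[Hz Zz] Hu]].
  exists z; split; [split; [exact Hz|apply Hroot, Zz]|].
  intros w [Hw Ew]. apply Hu. split; [exact Hw|apply Hroot, Ew].
Qed.

Theorem lemma2 (N : nat) (h g : R) (i j : nat) :
  (1 <= N)%nat -> 0 < h -> 0 < g ->
  (i <= N)%nat -> (j <= N)%nat -> i <> j ->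
  exists! D : R, 0 < D /\ Rk N h g i D = Rk N h g j D.
Proof.
  intros _ Hh Hg HiN HjN Hij.
  destruct (Nat.lt_gt_cases i j) as [[Hlt|Hgt] _]; [exact Hij| |].
  - exact (Rk_eq_unique_lt N h g i j Hh Hg Hlt HjN).
  - destruct (Rk_eq_unique_lt N h g j i Hh Hg Hgt HiN) as [z [[Hz E] U]].
    exists z; split; [split; [exact Hz|symmetry; exact E]|].
    intros w [Hw Ew]. apply U. split; [exact Hw|symmetry; exact Ew].
Qed.
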